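(* Let $q > 1$ be an integer. For all positive integers $n$ and $M$, $$|C(n,q,M+1)| \geq q\cdot|C(n,q,M)|.$$
   Context: Fix the alphabet $\{x_0,\ldots,x_{q-1}\}$ of $q$ letters. A word $W$ is an instance of a word $V = y_0y_1\cdots y_{m-1}$ (each $y_i$ a letter) if $W = A_0A_1\cdots A_{m-1}$ with each $A_i$ a nonempty word and $A_i = A_j$ whenever $y_i = y_j$. The Zimin words are defined by $Z_0 := \varepsilon$ (the empty word) and $Z_{n+1} := Z_n z_n Z_n$ for distinct letters $z_0,z_1,\dots$ (so $Z_1 = a$, $Z_2 = aba$, $Z_3=abacaba$). $C(n,q,M)$ denotes the set of words $W \in \{x_0,\ldots,x_{q-1}\}^M$ that are instances of $Z_n$. *)

From mathcomp Require Import all_boot.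
From mathcomp Require Import boolp.
Set Implicit Arguments. Unset Strict Implicit. Unset Printing Implicit Defensive.

Fixpoint zimin (n : nat) : seq nat :=
  if n is k.+1 then zimin k ++ k :: zimin k else [::].

Definition is_instance (T : eqType) (W : seq T) (V : seq nat) : Prop :=
  exists As : seq (seq T),
    [/\ size As = size V,
        all (fun A => A != [::]) As,
        flatten As = W &
        forall i j, i < size V -> j < size V ->
          nth 0 V i = nth 0 V j ->
          nth [::] As i = nth [::] As j].

Definition C (n q M : nat) : {set M.-tuple 'I_q} :=
  [set w : M.-tuple 'I_q | `[< is_instance (tval w) (zimin n) >]].

From mathcomp Require Import all_boot.
From mathcomp Require Import boolp zify.
Set Implicit Arguments. Unset Strict Implicit. Unset Printing Implicit Defensive.

(* A word is an instance of Z_{m+1} iff it factors as U v U with U an instance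
   of Z_m and v nonempty.  Let k be the least length of such a border U of w.
   Inserting a letter a right after the first k letters keeps the factorization
   (v becomes a :: v) and does not change the least border length, since borders
   of length <= k are untouched.  So w and a can be read back from the image,
   and (a, w) |-> insertion is an injection of 'I_q * C(n,q,M) into C(n,q,M+1). *)

Lemma zimin_lt n x : x \in zimin n -> x < n.
Proof.
elim: n => [|n IH] //=.
by rewrite mem_cat in_cons => /or3P [/IH|/eqP->|/IH]; lia.
Qed.

Lemma nth_cat_mirror (T : Type) (d : T) s x i : i != size s ->
  nth d (s ++ x :: s) i = nth d s (if i < size s then i else i - (size s).+1).
Proof.
move=> ne_i; rewrite nth_cat; case: ltnP => // le_i.
by have -> : i - size s = (i - (size s).+1).+1 by lia.
Qed.

Definition insert_at (T : Type) k (a : T) (w : seq T) := take k w ++ a :: drop k w.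

Lemma size_insert_at (T : Type) k (a : T) w : k <= size w ->
  size (insert_at k a w) = (size w).+1.
Proof. by move=> le_k; rewrite size_cat /= size_drop size_takel //; lia. Qed.

Lemma insert_at_tupleP (T : Type) n k (a : T) (w : n.-tuple T) :
  size (insert_at k a w) == n.+1.
Proof.
rewrite /insert_at size_cat /= size_take size_drop size_tuple.
by case: ltnP; lia.
Qed.

Lemma insert_at_inj (T : eqType) k (a1 a2 : T) (w1 w2 : seq T) :
  size w1 = size w2 -> insert_at k a1 w1 = insert_at k a2 w2 -> a1 = a2 /\ w1 = w2.
Proof.
move=> eq_size /eqP; rewrite eqseq_cat ?size_take ?eq_size //.
move=> /andP [/eqP eq_take /eqP [-> eq_drop]]; split=> //.
by rewrite -(cat_take_drop k w1) -(cat_take_drop k w2) eq_take eq_drop.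
Qed.

Section ZiminInstances.

Variables (T : eqType) (m : nat).

Lemma is_instance_ziminS_cat (U v : seq T) :
  v != [::] -> is_instance U (zimin m) -> is_instance (U ++ v ++ U) (zimin m.+1).
Proof.
move=> nz_v [As [sizeAs nzAs flatAs consAs]].
exists (As ++ v :: As); split=> /=.
- by rewrite !size_cat /= sizeAs.
- by rewrite all_cat /= nzAs nz_v.
- by rewrite flatten_cat /= flatAs.
set s := zimin m in sizeAs consAs *; rewrite size_cat /= => i j lt_i lt_j.
have mirror k : k < size s + (size s).+1 -> k != size s ->
    exists2 k', k' < size s &
      nth 0 (s ++ m :: s) k = nth 0 s k' /\ nth [::] (As ++ v :: As) k = nth [::] As k'.
  move=> lt_k ne_k; rewrite !nth_cat_mirror ?sizeAs //.
  by exists (if k < size s then k else k - (size s).+1) => //; case: (ltnP k); lia.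
have nth_mid : nth 0 (s ++ m :: s) (size s) = m by rewrite nth_cat ltnn subnn.
have letter_lt k : k < size s -> nth 0 s k < m by move=> lt_k; apply/zimin_lt/mem_nth.
case: (eqVneq i (size s)) => [->|ne_i]; case: (eqVneq j (size s)) => [->|ne_j] //.
- have [j' lt_j' [-> _]] := mirror j lt_j ne_j.
  by rewrite nth_mid => E; have := letter_lt _ lt_j'; rewrite -E ltnn.
- have [i' lt_i' [-> _]] := mirror i lt_i ne_i.
  by rewrite nth_mid => E; have := letter_lt _ lt_i'; rewrite E ltnn.
- have [i' lt_i' [-> ->]] := mirror i lt_i ne_i.
  have [j' lt_j' [-> ->]] := mirror j lt_j ne_j.
  exact: consAs.
Qed.

Lemma is_instance_ziminS_decomp (W : seq T) : is_instance W (zimin m.+1) ->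
  exists U v, [/\ v != [::], is_instance U (zimin m) & W = U ++ v ++ U].
Proof.
move=> [As [sizeAs nzAs flatAs consAs]].
rewrite [zimin _]/= in sizeAs consAs; set s := zimin m in sizeAs consAs *.
rewrite size_cat /= in sizeAs consAs.
have splitAs : As = take (size s) As ++ nth [::] As (size s) :: drop (size s).+1 As.
  by rewrite -drop_nth ?cat_take_drop //; lia.
have dropAs : drop (size s).+1 As = take (size s) As.
  apply: (@eq_from_nth _ [::]) => [|i]; first by rewrite size_drop size_takel; lia.
  rewrite size_drop => lt_i; rewrite nth_drop nth_take; last by lia.
  apply: consAs; try lia.
  have lt_is : i < size s by lia.
  by rewrite nth_cat_mirror ?ifF ?addKn ?nth_cat ?lt_is //; lia.
exists (flatten (take (size s) As)), (nth [::] As (size s)); split.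
- by apply: (allP nzAs); rewrite mem_nth // sizeAs; lia.
- exists (take (size s) As); split.
  + by rewrite size_takel //; lia.
  + by move: nzAs; rewrite {1}splitAs all_cat => /andP [].
  + by [].
  + move=> i j lt_i lt_j E; rewrite !nth_take //; apply: consAs; try lia.
    by rewrite !nth_cat lt_i lt_j.
- by rewrite -flatAs [in LHS]splitAs dropAs flatten_cat.
Qed.

Definition zimin_border (w : seq T) k : bool :=
  [&& k + k < size w, take k w == drop (size w - k) w &
      `[< is_instance (take k w) (zimin m) >] ].

Lemma is_instance_ziminS_border (w : seq T) :
  is_instance w (zimin m.+1) <-> exists k, zimin_border w k.
Proof.
split=> [/is_instance_ziminS_decomp [U [v [nz_v instU ->]]] | [k]].
- exists (size U); apply/and3P; split.
  + by move: nz_v; rewrite -size_eq0 !size_cat; lia.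
  + have -> : size (U ++ v ++ U) - size U = size (U ++ v) by rewrite !size_cat; lia.
    by rewrite take_size_cat // catA drop_size_cat.
  + by apply/asboolP; rewrite take_size_cat.
- move=> /and3P [lt_k /eqP eq_border /asboolP instU].
  have -> : w = take k w ++ drop k (take (size w - k) w) ++ take k w.
    rewrite [X in _ ++ _ ++ X]eq_border catA.
    have -> : take k w = take k (take (size w - k) w) by rewrite take_takel //; lia.
    by rewrite !cat_take_drop.
  apply: is_instance_ziminS_cat instU.
  by rewrite -size_eq0 size_drop size_takel ?leq_subr //; lia.
Qed.

Definition least_border (w : seq T) := find (zimin_border w) (iota 0 (size w)).

Lemma least_borderP (w : seq T) :
  is_instance w (zimin m.+1) -> zimin_border w (least_border w).
Proof.
move=> /is_instance_ziminS_border [k border_k].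
have has_border : has (zimin_border w) (iota 0 (size w)).
  apply/hasP; exists k => //; rewrite mem_iota /=.
  by move: border_k => /and3P [? _ _]; lia.
have := nth_find 0 has_border.
by rewrite nth_iota ?add0n //; move: has_border; rewrite has_find size_iota.
Qed.

Lemma least_border_min (w : seq T) k : k < least_border w -> ~~ zimin_border w k.
Proof.
move=> lt_k.
have le_least : least_border w <= size w.
  by rewrite -[X in _ <= X](size_iota 0) find_size.
by have := before_find 0 lt_k; rewrite nth_iota ?add0n => [->//|]; lia.
Qed.

(* Borders no longer than k lie inside the first and the last k letters. *)
Lemma zimin_border_insert_at k a (w : seq T) k' : k + k < size w -> k' <= k ->
  zimin_border (insert_at k a w) k' = zimin_border w k'.
Proof.
move=> lt_k le_k'.
have take_ins : take k' (insert_at k a w) = take k' w.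
  by rewrite /insert_at takel_cat ?take_takel // size_takel; lia.
have drop_ins : drop ((size w).+1 - k') (insert_at k a w) = drop (size w - k') w.
  rewrite /insert_at drop_cat size_takel ?ifF; try lia.
  have -> : (size w).+1 - k' - k = (size w - k' - k).+1 by lia.
  by rewrite /= drop_drop; congr drop; lia.
rewrite /zimin_border take_ins size_insert_at; last by lia.
by rewrite drop_ins (ltn_trans _ (ltnSn _)) ?(leq_ltn_trans _ lt_k) ?leq_add.
Qed.

Lemma least_border_insert_at a (w : seq T) : is_instance w (zimin m.+1) ->
  let k := least_border w in
  is_instance (insert_at k a w) (zimin m.+1) /\ least_border (insert_at k a w) = k.
Proof.
move=> inst_w k; have border_k : zimin_border w k by apply: least_borderP.
have lt_k : k + k < size w by case/and3P: border_k.
have border_ins : zimin_border (insert_at k a w) k by rewrite zimin_border_insert_at.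
have inst_ins : is_instance (insert_at k a w) (zimin m.+1).
  by apply/is_instance_ziminS_border; exists k.
split=> //; case: (ltngtP (least_border (insert_at k a w)) k) => // [lt_least|gt_least].
- have := least_border_min lt_least.
  by rewrite -(zimin_border_insert_at a lt_k (ltnW lt_least)) // (least_borderP inst_ins).
- by have := least_border_min gt_least; rewrite border_ins.
Qed.

End ZiminInstances.

Theorem mainTheorem3 (q : nat) (hq : 1 < q) (n M : nat)
  (hn : 0 < n) (hM : 0 < M) :
  q * #|C n q M| <= #|C n q M.+1|.
Proof.
case: n hn => // m _.
pose ins (p : 'I_q * M.-tuple 'I_q) : M.+1.-tuple 'I_q :=
  Tuple (insert_at_tupleP (least_border m p.2) p.1 p.2).
have ins_inj : {in setX [set: 'I_q] (C m.+1 q M) &, injective ins}.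
  move=> [a1 w1] [a2 w2]; rewrite !inE /= => /asboolP inst1 /asboolP inst2.
  move=> /(congr1 val) /= eq_ins.
  have [_ least1] := least_border_insert_at a1 inst1.
  have [_ least2] := least_border_insert_at a2 inst2.
  have eq_least : least_border m w1 = least_border m w2 by rewrite -least1 -least2 eq_ins.
  rewrite eq_least in eq_ins.
  have [-> eq_w] := insert_at_inj (etrans (size_tuple w1) (esym (size_tuple w2))) eq_ins.
  by congr pair; apply: val_inj.
have ins_sub : ins @: setX [set: 'I_q] (C m.+1 q M) \subset C m.+1 q M.+1.
  apply/subsetP => _ /imsetP [[a w] + ->]; rewrite !inE /= => /asboolP inst_w.
  by apply/asboolP; exact: (least_border_insert_at a inst_w).1.
have -> : q * #|C m.+1 q M| = #|setX [set: 'I_q] (C m.+1 q M)|.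
  by rewrite cardsX cardsT card_ord.
rewrite -(card_in_imset ins_inj).
exact: subset_leq_card.
Qed.
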